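(* Let $A_K^*\in\mathbb{R}^{n\times n}$, let $x^*(0)\in\mathbb{R}^n$, and let $x^*(t)=e^{A_K^* t}x^*(0)$. Fix sample times $t_1,\dots,t_N$, one of which equals $0$, so that $x^*(0)$ is a column of $\Lambda_0$. Let $\Lambda_i$, $\bar\Lambda_1$, $\bar\Lambda_2$ be the data matrices defined in the context. If $M\in\mathbb{R}^{n\times n}$ satisfies $M\bar\Lambda_1=\bar\Lambda_2$, then the solution $\hat x$ of $\dot{\hat x}=M\hat x$ with $\hat x(0)=x^*(0)$ satisfies $\hat x(t)=x^*(t)$ for all $t$.
   Context: Data matrices: for each $i=0,1,\dots,n$, let $x^{*(i)}$ denote the $i$-th time derivative of $x^*$. Define $\Lambda_i=[x^{*(i)}(t_1)\ \cdots\ x^{*(i)}(t_N)]\in\mathbb{R}^{n\times N}$. Define $\bar\Lambda_1=[\Lambda_0\ \Lambda_1\ \cdots\ \Lambda_{n-1}]\in\mathbb{R}^{n\times nN}$ and $\bar\Lambda_2=[\Lambda_1\ \Lambda_2\ \cdots\ \Lambda_n]\in\mathbb{R}^{n\times nN}$. In particular $\Lambda_{i}=A_K^*\Lambda_{i-1}$ for $i=1,\dots,n$, and $A_K^*\bar\Lambda_1=\bar\Lambda_2$. *)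

From HB Require Import structures.
From mathcomp Require Import all_boot all_order all_algebra.
From mathcomp Require Import all_classical all_reals all_analysis.
Set Implicit Arguments. Unset Strict Implicit. Unset Printing Implicit Defensive.
Import Order.TTheory GRing.Theory Num.Theory.
Import numFieldNormedType.Exports.
Local Open Scope ring_scope.
Local Open Scope classical_set_scope.

Definition expmx (R : realType) (n : nat) (A : 'M[R]_n) : 'M[R]_n :=
  lim ((fun N : nat => \sum_(k < N) (k`!%:R)^-1 *: A ^+ k) @ \oo).

Definition traj (R : realType) (n : nat) (A : 'M[R]_n) (x0 : 'cV[R]_n)
  : R -> 'cV[R]_n := fun t => expmx (t *: A) *m x0.

Definition Lambda (R : realType) (n N : nat) (x : R -> 'cV[R]_n) (ts : 'I_N -> R)
  (i : nat) : 'M[R]_(n, N) :=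
  \matrix_(r < n, j < N) (derive1n i x (ts j)) r ord0.

Definition Lambda_bar1 (R : realType) (n N : nat) (x : R -> 'cV[R]_n) (ts : 'I_N -> R) :=
  \mxrow_(i < n) Lambda x ts i.

Definition Lambda_bar2 (R : realType) (n N : nat) (x : R -> 'cV[R]_n) (ts : 'I_N -> R) :=
  \mxrow_(i < n) Lambda x ts i.+1.

From HB Require Import structures.
From mathcomp Require Import all_boot all_order all_algebra.
From mathcomp Require Import all_classical all_reals all_analysis.
From mathcomp Require Import ring lra.
Import Order.TTheory GRing.Theory Num.Theory.
Import numFieldNormedType.Exports.
Set Implicit Arguments. Unset Strict Implicit. Unset Printing Implicit Defensive.
Local Open Scope ring_scope.
Local Open Scope classical_set_scope.

(* At the sample time t_j = 0 the identity M Λ̄1 = Λ̄2 says that M agrees with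
   A on the Krylov vectors A^i x(0), i < n.  By Cayley-Hamilton every A^k x(0)
   is a combination of these, so M e^{tA} x(0) = A e^{tA} x(0) termwise in the
   exponential series: the sampled trajectory itself solves x' = M x.  Linear
   ODEs have unique solutions (Gronwall's estimate applied to |x̂ - x|²), so
   x̂ = x. *)

Section MatrixCalculus.
Context {R : realFieldType} {V : normedModType R}.

Lemma is_derive_mxP {m p : nat} (F : V -> 'M[R]_(m, p)) (D : 'M[R]_(m, p)) t v :
  is_derive t v F D <-> forall i j, is_derive t v (fun s => F s i j) (D i j).
Proof.
split=> [FD i j|FDij].
  have dF : derivable F t v by case: FD.
  apply: DeriveDef; first exact: (derivable_mxP F t v).1 dF i j.
  by rewrite -[D]derive_val derive_mx // mxE.
have dF : derivable F t v by apply/derivable_mxP => i j; case: (FDij i j).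
apply: DeriveDef => //; rewrite derive_mx //; apply/matrixP => i j.
by rewrite mxE derive_val.
Qed.

Lemma is_derive_mulmxl {m p q : nat} (C : 'M[R]_(m, p)) (F : V -> 'M[R]_(p, q))
    D t v :
  is_derive t v F D -> is_derive t v (fun s => C *m F s) (C *m D).
Proof.
move=> /is_derive_mxP FD; apply/is_derive_mxP => i j.
rewrite (_ : (fun s => _) = \sum_k (fun s => C i k *: F s k j)); last first.
  by apply/funext => s; rewrite mxE fct_sumE.
rewrite mxE; apply: is_derive_sum => k; exact: is_deriveZ.
Qed.

Lemma is_derive_mulmxr {m p q : nat} (F : V -> 'M[R]_(m, p)) (X : 'M[R]_(p, q))
    D t v :
  is_derive t v F D -> is_derive t v (fun s => F s *m X) (D *m X).
Proof.
move=> /is_derive_mxP FD; apply/is_derive_mxP => i j.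
rewrite (_ : (fun s => _) = \sum_k (fun s => X k j *: F s i k)); last first.
  by apply/funext => s; rewrite mxE fct_sumE; apply: eq_bigr => k _; rewrite mulrC.
rewrite mxE; apply: is_derive_sum => k; rewrite mulrC; exact: is_deriveZ.
Qed.

End MatrixCalculus.

Section MatrixConvergence.
Context {R : realFieldType} {T : Type} {G : set_system T} {FG : Filter G}.

Lemma cvg_mxP {m p : nat} {F : T -> 'M[R]_(m, p)} {L : 'M[R]_(m, p)} :
  F @ G --> L <-> forall i j, (fun x => F x i j) @ G --> L i j.
Proof.
split=> [FL i j|FLij].
  exact: (continuous_cvg _ (@coord_continuous R m p i j L) FL).
apply/cvgrPdist_le => /= e e0; near=> x.
rewrite /Num.Def.normr/= mx_normrE (bigmax_le _ (ltW e0))//= => ij _.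
rewrite !mxE/=; move: ij; near: x; apply: filter_forall => /= ij.
exact: ((cvgrPdist_le _ _).1 (FLij ij.1 ij.2)).
Unshelve. all: by end_near. Qed.

Lemma cvg_mulmxl {m p q : nat} (C : 'M[R]_(m, p)) (F : T -> 'M[R]_(p, q))
    (L : 'M[R]_(p, q)) :
  F @ G --> L -> (fun x => C *m F x) @ G --> C *m L.
Proof.
move=> /cvg_mxP FL; apply/cvg_mxP => i j; rewrite mxE.
under eq_cvg do rewrite mxE.
apply: (cvg_big add_continuous) => k _; exact: cvgMl_tmp.
Qed.

Lemma cvg_mulmxr {m p q : nat} (F : T -> 'M[R]_(m, p)) (X : 'M[R]_(p, q))
    (L : 'M[R]_(m, p)) :
  F @ G --> L -> (fun x => F x *m X) @ G --> L *m X.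
Proof.
move=> /cvg_mxP FL; apply/cvg_mxP => i j; rewrite mxE.
under eq_cvg do rewrite mxE.
apply: (cvg_big add_continuous) => k _; exact: cvgMr_tmp.
Qed.

End MatrixConvergence.

Section Gronwall.
Variable R : realType.
Implicit Types (f df : R -> R) (a c s t : R).

Lemma is_derive_expRM a s :
  is_derive s 1 (fun u => expR (a * u)) (a * expR (a * s)).
Proof.
have dM : is_derive s 1 ( *%R a) a.
  rewrite (_ : *%R a = a \*: id) //.
  by apply: is_derive_eq; rewrite /GRing.scale /= mulr1.
by rewrite mulrC; exact: is_derive1_comp.
Qed.

Lemma gronwall_eq0_ge0 f df c :
  (forall s, is_derive s 1 f (df s)) -> (forall s, 0 <= f s) ->
  (forall s, df s <= c * f s) -> f 0 = 0 ->
  forall t, 0 <= t -> f t = 0.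
Proof.
move=> fdf f_ge0 df_le f0 t t_ge0.
pose psi : R -> R := (fun s => expR (- c * s)) * f.
pose dpsi s := expR (- c * s) * (df s - c * f s).
have psi_dpsi s : is_derive s 1 psi (dpsi s).
  have /is_derive_eq := is_deriveM (is_derive_expRM (- c) s) (fdf s).
  by apply; rewrite /dpsi /GRing.scale /=; ring.
have psi_cont : {within `[0, t], continuous psi}.
  apply: continuous_subspaceT => s.
  exact/differentiable_continuous/derivable1_diffP.
have [s _ psi_t] := MVT_segment t_ge0 (fun s _ => psi_dpsi s) psi_cont.
have psi0 : psi 0 = 0 by rewrite /psi fctE f0 mulr0.
have : psi t - psi 0 <= 0.
  by rewrite psi_t mulr_le0_ge0 // ?subr0 // mulr_ge0_le0 ?expR_ge0 // subr_le0.
rewrite psi0 subr0 /psi fctE pmulr_rle0 ?expR_gt0 // => ft_le0.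
by apply/eqP; rewrite eq_le ft_le0 f_ge0.
Qed.

Lemma gronwall_eq0 f df c :
  (forall s, is_derive s 1 f (df s)) -> (forall s, 0 <= f s) ->
  (forall s, `|df s| <= c * f s) -> f 0 = 0 ->
  forall t, f t = 0.
Proof.
move=> fdf f_ge0 df_le f0 t; have [t_ge0|t_lt0] := leP 0 t.
  apply: (gronwall_eq0_ge0 fdf) => // s.
  exact: le_trans (ler_norm _) (df_le s).
(* the derivative premise is discharged by instance resolution from [fdf] *)
rewrite -[t]opprK; apply: (@gronwall_eq0_ge0 (f \o -%R) (fun s => df (- s) * -1) c).
- by move=> s; exact: f_ge0.
- move=> s; rewrite mulrN1 /=.
  by have := df_le (- s); rewrite ler_norml => /andP[]; rewrite lerNl.
- by rewrite /= oppr0.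
- by rewrite oppr_ge0 ltW.
Qed.

End Gronwall.

Section LinearODE.
Variables (R : realType) (n : nat).
Implicit Types (A M : 'M[R]_n) (v : 'cV[R]_n) (s t : R).

Definition mx_abs_sum A : R := \sum_i \sum_j `|A i j|.

Lemma mx_abs_sum_ge0 A : 0 <= mx_abs_sum A.
Proof. by apply: sumr_ge0 => i _; apply: sumr_ge0. Qed.

Definition sqnorm v : R := \sum_i v i 0 ^+ 2.

Lemma sqnorm_ge0 v : 0 <= sqnorm v.
Proof. by apply: sumr_ge0 => i _; exact: sqr_ge0. Qed.

Lemma sqr_le_sqnorm v i : v i 0 ^+ 2 <= sqnorm v.
Proof.
rewrite /sqnorm [leRHS](bigD1 i) //= lerDl.
by apply: sumr_ge0 => j _; exact: sqr_ge0.
Qed.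

Lemma sqnorm_eq0 v : sqnorm v = 0 -> v = 0.
Proof.
move=> /eqP; rewrite psumr_eq0 => [/allP v0|i _]; last exact: sqr_ge0.
apply/matrixP => i j; rewrite (ord1 j) mxE.
by apply/eqP; rewrite -sqrf_eq0; apply: v0; rewrite mem_index_enum.
Qed.

Lemma normr_mul_le_sqnorm v i j : `|v i 0| * `|v j 0| <= sqnorm v.
Proof.
have := sqr_le_sqnorm v i; have := sqr_le_sqnorm v j.
rewrite -[v i 0 ^+ 2]real_normK ?num_real // -[v j 0 ^+ 2]real_normK ?num_real //.
have := normr_ge0 (v i 0); have := normr_ge0 (v j 0).
nra.
Qed.

Lemma sqnorm_mulmx_le M v :
  `|\sum_i v i 0 * (M *m v) i 0| <= mx_abs_sum M * sqnorm v.
Proof.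
rewrite /mx_abs_sum mulr_suml; apply: le_trans (ler_norm_sum _ _ _) _.
apply: ler_sum => i _; rewrite mxE mulr_sumr mulr_suml.
apply: le_trans (ler_norm_sum _ _ _) _; apply: ler_sum => j _.
rewrite mulrCA normrM ler_wpM2l // normrM.
exact: normr_mul_le_sqnorm.
Qed.

Lemma is_derive_sqnorm (z : R -> 'cV[R]_n) (t : R) (D : 'cV[R]_n) :
  is_derive t 1 z D ->
  is_derive t 1 (sqnorm \o z) (2 * \sum_i z t i 0 * D i 0).
Proof.
move=> /is_derive_mxP zD.
have -> : sqnorm \o z = \sum_i ((fun s => z s i 0) * (fun s => z s i 0) : R -> R).
  apply/funext => s; rewrite /= /sqnorm fct_sumE.
  by apply: eq_bigr => i _; rewrite fctE.
apply: is_derive_eq; rewrite mulr_sumr; apply: eq_bigr => i _.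
by rewrite /GRing.scale /= mulr2n mulrDl mul1r mulrC.
Qed.

Lemma linear_ode_eq0 M (z : R -> 'cV[R]_n) :
  (forall t, is_derive t 1 z (M *m z t)) -> z 0 = 0 -> forall t, z t = 0.
Proof.
move=> zM z0 t; apply: sqnorm_eq0.
apply: (@gronwall_eq0 _ (sqnorm \o z) _ (2 * mx_abs_sum M)) => //.
- by move=> s; exact: is_derive_sqnorm.
- by move=> s; exact: sqnorm_ge0.
- by move=> s; rewrite normrM ger0_norm // -mulrA ler_wpM2l // sqnorm_mulmx_le.
- by rewrite /= z0 /sqnorm big1 // => i _; rewrite mxE expr0n.
Qed.

Lemma linear_ode_uniq M (x y : R -> 'cV[R]_n) :
  (forall t, is_derive t 1 x (M *m x t)) ->
  (forall t, is_derive t 1 y (M *m y t)) ->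
  x 0 = y 0 -> x = y.
Proof.
move=> xM yM xy0; apply/funext => t; apply/eqP; rewrite -subr_eq0; apply/eqP.
apply: (@linear_ode_eq0 M (x - y)) => [s|]; last by rewrite fctE xy0 subrr.
by apply: is_derive_eq; rewrite fctE mulmxBr.
Qed.

End LinearODE.

Section MatrixExponential.
Variables (R : realType) (n : nat).
Implicit Types (A M : 'M[R]_n) (a s t : R).

Lemma normr_expr_entry_le A k i j : `|(A ^+ k) i j| <= mx_abs_sum A ^+ k.
Proof.
elim: k i j => [|k IH] i j.
  by rewrite expr0 mxE; case: (i == j); rewrite ?normr1 ?normr0.
rewrite exprS -mulmxE mxE exprS; apply: le_trans (ler_norm_sum _ _ _) _.
apply: (@le_trans _ _ (\sum_l `|A i l| * mx_abs_sum A ^+ k)).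
  by apply: ler_sum => l _; rewrite normrM ler_wpM2l.
rewrite -mulr_suml ler_wpM2r ?exprn_ge0 ?mx_abs_sum_ge0 //.
rewrite /mx_abs_sum [leRHS](bigD1 i) //= lerDl.
by apply: sumr_ge0 => l _; apply: sumr_ge0.
Qed.

Lemma exprZmx a A k : (a *: A) ^+ k = a ^+ k *: A ^+ k.
Proof.
elim: k => [|k IH]; first by rewrite !expr0 scale1r.
by rewrite !exprS IH -!mulmxE -scalemxAl -scalemxAr scalerA.
Qed.

Definition expmx_partial A (N : nat) : 'M[R]_n :=
  \sum_(k < N) (k`!%:R)^-1 *: A ^+ k.

(* power series in [t] of the entry [(i, j)] of [A ^+ m *m expmx (t *: A)] *)
Definition expmx_coef A m i j : R^nat := fun k => (A ^+ (k + m)) i j / k`!%:R.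

Lemma mulmx_expmx_partial_entry A m t N i j :
  (A ^+ m *m expmx_partial (t *: A) N) i j = pseries (expmx_coef A m i j) t N.
Proof.
rewrite /expmx_partial /pseries /series /= big_mkord mulmx_sumr summxE.
apply: eq_bigr => k _; rewrite -scalemxAr exprZmx -scalemxAr mulmxE -exprD !mxE addnC.
by rewrite /expmx_coef mulrCA mulrC [_^-1 * _]mulrC.
Qed.

Lemma is_cvg_pseries_expmx_coef A m i j t : cvgn (pseries (expmx_coef A m i j) t).
Proof.
apply: normed_cvg; rewrite /normed_series_of /=.
apply: (@series_le_cvg _ _ ((mx_abs_sum A ^+ m) *: exp_coeff (mx_abs_sum A * `|t|))).
- by move=> k.
- move=> k; rewrite /= mulr_ge0 ?exprn_ge0 ?mx_abs_sum_ge0 //.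
  by apply: exp_coeff_ge0; rewrite mulr_ge0 ?mx_abs_sum_ge0.
- move=> k /=; rewrite /expmx_coef normrM normrX normrM normfV normr_nat.
  rewrite /exp_coeff !fctE /=.
  apply: (@le_trans _ _ (mx_abs_sum A ^+ (k + m) / k`!%:R * `|t| ^+ k)).
    by rewrite ler_wpM2r ?exprn_ge0 // ler_wpM2r ?invr_ge0 // normr_expr_entry_le.
  by rewrite exprD exprMn /GRing.scale /= le_eqVlt; apply/orP; left; apply/eqP; ring.
- apply: is_cvg_seriesZ; exact: is_cvg_series_exp_coeff.
Qed.

Lemma pseries_diffs_expmx_coef A m i j :
  pseries_diffs (expmx_coef A m i j) = expmx_coef A m.+1 i j.
Proof.
apply/funext => k; rewrite /pseries_diffs /expmx_coef factS natrM invfM.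
rewrite addSn -addnS; field.
by rewrite nat1r !pnatr_eq0 -lt0n fact_gt0.
Qed.

Lemma cvg_expmx_partial A : expmx_partial A @ \oo --> expmx A.
Proof.
pose L := \matrix_(i, j) limn (pseries (expmx_coef A 0 i j) 1).
suff AL : expmx_partial A @ \oo --> L by rewrite /expmx (cvg_lim _ AL).
apply/cvg_mxP => i j; rewrite mxE.
have entryE N : expmx_partial A N i j = pseries (expmx_coef A 0 i j) 1 N.
  by rewrite -mulmx_expmx_partial_entry expr0 mul1mx scale1r.
under eq_cvg do rewrite entryE.
exact: is_cvg_pseries_expmx_coef.
Qed.

Lemma mulmx_expmx_entry A m t i j :
  (A ^+ m *m expmx (t *: A)) i j = limn (pseries (expmx_coef A m i j) t).
Proof.
apply/esym/cvg_lim => //; under eq_cvg do rewrite -mulmx_expmx_partial_entry.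
by move: i j; apply/cvg_mxP; apply: cvg_mulmxl; exact: cvg_expmx_partial.
Qed.

Lemma is_derive_expmx A t :
  is_derive t 1 (fun s => expmx (s *: A)) (A *m expmx (t *: A)).
Proof.
apply/is_derive_mxP => i j.
have entryE s : expmx (s *: A) i j = limn (pseries (expmx_coef A 0 i j) s).
  by rewrite -mulmx_expmx_entry expr0 mul1mx.
rewrite (funext entryE) -[A in A *m _]expr1 mulmx_expmx_entry.
rewrite -pseries_diffs_expmx_coef.
apply: (@pseries_snd_diffs _ _ (`|t| + 1)).
- exact: is_cvg_pseries_expmx_coef.
- by rewrite pseries_diffs_expmx_coef; exact: is_cvg_pseries_expmx_coef.
- by rewrite !pseries_diffs_expmx_coef; exact: is_cvg_pseries_expmx_coef.
- by rewrite [ltRHS]ger0_norm ?ltrDl // addr_ge0.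
Qed.

Lemma expmx0 : expmx (0 : 'M[R]_n) = 1%:M.
Proof.
apply: cvg_lim => //; apply: cvg_near_cst; near=> N.
have N_gt0 : (0 < N)%N by near: N; exists 1%N.
rewrite /expmx_partial -(prednK N_gt0) big_ord_recl /= fact0 invr1 scale1r expr0.
by rewrite big1 ?addr0 // => k _; rewrite expr0n /= scaler0.
Unshelve. all: by end_near. Qed.

End MatrixExponential.

Section Trajectory.
Variables (R : realType) (n : nat) (A : 'M[R]_n) (x0 : 'cV[R]_n).
Implicit Type t : R.

Lemma traj0 : traj A x0 0 = x0.
Proof. by rewrite /traj scale0r expmx0 mul1mx. Qed.

Lemma is_derive_traj t : is_derive t 1 (traj A x0) (A *m traj A x0 t).
Proof. by rewrite /traj mulmxA; apply: is_derive_mulmxr; exact: is_derive_expmx. Qed.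

Lemma derive1n_traj k : derive1n k (traj A x0) = fun t => A ^+ k *m traj A x0 t.
Proof.
elim: k => [|k IH]; first by apply/funext => t; rewrite expr0 mul1mx.
apply/funext => t; rewrite derive1nS IH derive1E.
have traj_derive := is_derive_mulmxl (A ^+ k) (is_derive_traj t).
by rewrite derive_val mulmxA mulmxE -exprSr.
Qed.

Lemma mulmx_traj (M : 'M[R]_n) :
  (forall k, M *m (A ^+ k *m x0) = A ^+ k.+1 *m x0) ->
  forall t, M *m traj A x0 t = A *m traj A x0 t.
Proof.
move=> MA t; apply/eqP; rewrite -subr_eq0 -mulmxBl /traj mulmxA; apply/eqP.
have partial0 : (fun N => (M - A) *m expmx_partial (t *: A) N *m x0) = cst 0.
  apply/funext => N; rewrite /expmx_partial mulmx_sumr mulmx_suml big1 // => k _.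
  rewrite -scalemxAr exprZmx -scalemxAr -!scalemxAl -mulmxA mulmxBl MA.
  by rewrite mulmxA mulmxE -exprS subrr !scaler0.
have : (fun N => (M - A) *m expmx_partial (t *: A) N *m x0) @ \oo -->
       (M - A) *m expmx (t *: A) *m x0.
  by apply: cvg_mulmxr; apply: cvg_mulmxl; exact: cvg_expmx_partial.
by rewrite partial0 => /cvg_lim <- //; rewrite lim_cst.
Qed.

End Trajectory.

Lemma char_poly_expr (R : comNzRingType) n (A : 'M[R]_n.+1) :
  A ^+ n.+1 = - \sum_(i < n.+1) (char_poly A)`_i *: A ^+ i.
Proof.
have := Cayley_Hamilton A.
rewrite -{1}[char_poly A]coefK poly_def linear_sum /= size_char_poly big_ord_recr /=.
have -> : (char_poly A)`_n.+1 = 1.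
  by have /monicP := char_poly_monic A; rewrite /lead_coef size_char_poly.
rewrite linearZ /= rmorphXn /= horner_mx_X scale1r.
move/eqP; rewrite addrC addr_eq0 => /eqP ->; congr (- _).
by apply: eq_bigr => i _; rewrite linearZ /= rmorphXn /= horner_mx_X.
Qed.

Lemma krylov_extend (R : comNzRingType) n (A M : 'M[R]_n) (v : 'cV[R]_n) :
  (forall i, (i < n)%N -> M *m (A ^+ i *m v) = A ^+ i.+1 *m v) ->
  forall k, M *m (A ^+ k *m v) = A ^+ k.+1 *m v.
Proof.
case: n A M v => [|n] A M v MA k; first by rewrite !flatmx0.
pose c i := (char_poly A)`_i.
have exprDn d : A ^+ (d + n.+1) *m v = - \sum_(i < n.+1) c i *: (A ^+ (d + i) *m v).
  rewrite exprD char_poly_expr mulrN mulr_sumr mulNmx mulmx_suml; congr (- _).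
  by apply: eq_bigr => i _; rewrite -scalerAr -exprD scalemxAl.
elim/ltn_ind: k => k IH; have [/MA //|le_nk] := ltnP k n.+1.
rewrite -(subnK le_nk) exprDn mulmxN mulmx_sumr -addSn exprDn; congr (- _).
by apply: eq_bigr => i _; rewrite -scalemxAr IH ?addSn // -{2}(subnK le_nk) ltn_add2l.
Qed.

Lemma mulmx_derive1n_Lambda (R : realType) (n N : nat) (M : 'M[R]_n)
    (x : R -> 'cV[R]_n) (ts : 'I_N -> R) :
  M *m Lambda_bar1 x ts = Lambda_bar2 x ts ->
  forall (i : 'I_n) (j : 'I_N), M *m derive1n i x (ts j) = derive1n i.+1 x (ts j).
Proof.
move=> ML i j; have := congr1 (fun B => submxrow B i) ML.
rewrite /Lambda_bar1 /Lambda_bar2 mul_mxrow !mxrowK => /matrixP MLij.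
apply/matrixP => r c; rewrite (ord1 c); have := MLij r j; rewrite !mxE => <-.
by apply: eq_bigr => l _; rewrite !mxE.
Qed.

Theorem lemma3 (R : realType) (n N : nat) (AK M : 'M[R]_n) (x0 : 'cV[R]_n)
  (ts : 'I_N -> R) (xhat : R -> 'cV[R]_n) :
  (exists j : 'I_N, ts j = 0) ->
  M *m Lambda_bar1 (traj AK x0) ts = Lambda_bar2 (traj AK x0) ts ->
  (forall t : R, is_derive t 1 xhat (M *m xhat t)) ->
  xhat 0 = x0 ->
  forall t : R, xhat t = traj AK x0 t.
Proof.
move=> [j0 tsj0] ML xhatM xhat0 t.
have MA_krylov k : M *m (AK ^+ k *m x0) = AK ^+ k.+1 *m x0.
  apply: krylov_extend => i lt_in.
  have := mulmx_derive1n_Lambda ML (Ordinal lt_in) j0.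
  by rewrite !derive1n_traj tsj0 traj0.
have trajM (s : R) : is_derive s 1 (traj AK x0) (M *m traj AK x0 s).
  by rewrite (mulmx_traj MA_krylov); exact: is_derive_traj.
by rewrite (linear_ode_uniq xhatM trajM) // xhat0 traj0.
Qed.
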